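(* Let $k_1,k_2,k_3,a_2,a_5$ be real constants with $(a_2,a_5)\neq(0,0)$, let $r=\sqrt{x^2+y^2}$, and consider the Newtonian system $\ddot x=-\partial_x V_3$, $\ddot y=-\partial_y V_3$ on the region of the plane where $r\neq0$ and $a_2y-a_5x\neq 0$, with potential $$V_3=\frac{k_1}{(a_2y-a_5x)^2}+\frac{k_2}{r}+\frac{k_3(a_2x+a_5y)}{r(a_2y-a_5x)^2}.$$ Then \begin{align*} J_3=&(x\dot y-y\dot x)^2(a_2\dot x+a_5\dot y)+\frac{2k_1r^2}{(a_2y-a_5x)^2}(a_2\dot x+a_5\dot y)-\frac{k_2(a_2y-a_5x)}{r}(x\dot y-y\dot x)\\ &+\frac{k_3r}{a_2y-a_5x}(a_2\dot y-a_5\dot x)-\frac{k_3(a_2x+a_5y)}{r(a_2y-a_5x)}(x\dot y-y\dot x)+\frac{2k_3(a_2x+a_5y)r}{(a_2y-a_5x)^2}(a_2\dot x+a_5\dot y) \end{align*} is constant along every solution. *)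

From Stdlib Require Import Reals.
From Coquelicot Require Import Coquelicot.
Open Scope R_scope.

Definition rad (x y : R) : R := sqrt (x ^ 2 + y ^ 2).

Definition V3 (k1 k2 k3 a2 a5 : R) (x y : R) : R :=
  k1 / (a2 * y - a5 * x) ^ 2 + k2 / rad x y
  + k3 * (a2 * x + a5 * y) / (rad x y * (a2 * y - a5 * x) ^ 2).

(* the first integral J_3 as a function of position (x,y) and velocity (vx,vy) *)
Definition J3 (k1 k2 k3 a2 a5 : R) (x y vx vy : R) : R :=
  let r := rad x y in
  let L := x * vy - y * vx in
  let w := a2 * y - a5 * x in
  let u := a2 * x + a5 * y in
  L ^ 2 * (a2 * vx + a5 * vy)
  + 2 * k1 * r ^ 2 / w ^ 2 * (a2 * vx + a5 * vy)
  - k2 * w / r * L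
  + k3 * r / w * (a2 * vy - a5 * vx)
  - k3 * u / (r * w) * L
  + 2 * k3 * u * r / w ^ 2 * (a2 * vx + a5 * vy).

(* Newton's equations turn the time derivative of J3 along a solution into a
   rational function of x, y, the velocities and r = sqrt (x^2 + y^2); it
   vanishes identically once r^2 = x^2 + y^2 is used, so J3 is constant on the
   time interval by the mean value theorem. *)

From Stdlib Require Import Reals Lra.
From Coquelicot Require Import Coquelicot.
Open Scope R_scope.

Lemma is_derive_0_constant_on_open_interval (f : R -> R) (a b : R) :
  (forall t, a < t < b -> is_derive f t 0) ->
  forall t1 t2, a < t1 < b -> a < t2 < b -> f t1 = f t2.
Proof.
  intros Df.
  assert (Hle : forall t1 t2, a < t1 < b -> a < t2 < b -> t1 <= t2 -> f t1 = f t2).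
  { intros t1 t2 H1 H2 [Hlt | ->]; [| reflexivity].
    apply (eq_is_derive f); [| exact Hlt].
    intros t Ht; apply Df; lra. }
  intros t1 t2 H1 H2.
  destruct (Rle_or_lt t1 t2) as [H | H].
  - now apply Hle.
  - symmetry; apply Hle; auto; lra.
Qed.

Lemma sum_sqr_pos_of_rad_neq0 (x y : R) : rad x y <> 0 -> 0 < x ^ 2 + y ^ 2.
Proof.
  intros Hr; destruct (Rle_or_lt (x ^ 2 + y ^ 2) 0) as [H | H]; auto.
  exfalso; apply Hr, sqrt_neg_0, H.
Qed.

Lemma rad_mul_rad (x y : R) : rad x y * rad x y = x ^ 2 + y ^ 2.
Proof. apply sqrt_sqrt; nra. Qed.

Lemma pow_SS_mul (r : R) (n : nat) : r ^ S (S n) = r * r * r ^ n.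
Proof. simpl; ring. Qed.

Lemma Derive_V3_x (k1 k2 k3 a2 a5 x y : R) :
  rad x y <> 0 -> a2 * y - a5 * x <> 0 ->
  Derive (fun u => V3 k1 k2 k3 a2 a5 u y) x =
  let r := rad x y in let w := a2 * y - a5 * x in let u := a2 * x + a5 * y in
  2 * k1 * a5 / w ^ 3 - k2 * x / r ^ 3
  + k3 * (a2 / (r * w ^ 2) - u * x / (r ^ 3 * w ^ 2) + 2 * u * a5 / (r * w ^ 3)).
Proof.
  intros Hr Hw; pose proof (sum_sqr_pos_of_rad_neq0 _ _ Hr) as Hp.
  apply is_derive_unique; unfold V3, rad in *; auto_derive.
  all: replace (x * (x * 1) + y * (y * 1)) with (x ^ 2 + y ^ 2) by ring;
       replace (a2 * y + - (a5 * x)) with (a2 * y - a5 * x) by ring.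
  - repeat split; auto; repeat apply Rmult_integral_contrapositive_currified; auto; lra.
  - cbv zeta; field; auto.
Qed.

Lemma Derive_V3_y (k1 k2 k3 a2 a5 x y : R) :
  rad x y <> 0 -> a2 * y - a5 * x <> 0 ->
  Derive (fun u => V3 k1 k2 k3 a2 a5 x u) y =
  let r := rad x y in let w := a2 * y - a5 * x in let u := a2 * x + a5 * y in
  - 2 * k1 * a2 / w ^ 3 - k2 * y / r ^ 3
  + k3 * (a5 / (r * w ^ 2) - u * y / (r ^ 3 * w ^ 2) - 2 * u * a2 / (r * w ^ 3)).
Proof.
  intros Hr Hw; pose proof (sum_sqr_pos_of_rad_neq0 _ _ Hr) as Hp.
  apply is_derive_unique; unfold V3, rad in *; auto_derive.
  all: replace (x * (x * 1) + y * (y * 1)) with (x ^ 2 + y ^ 2) by ring;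
       replace (a2 * y + - (a5 * x)) with (a2 * y - a5 * x) by ring.
  - repeat split; auto; repeat apply Rmult_integral_contrapositive_currified; auto; lra.
  - cbv zeta; field; auto.
Qed.

Lemma is_derive_J3_along_solution (k1 k2 k3 a2 a5 : R) (x y vx vy : R -> R) (t : R) :
  rad (x t) (y t) <> 0 -> a2 * y t - a5 * x t <> 0 ->
  is_derive x t (vx t) -> is_derive y t (vy t) ->
  is_derive vx t (- Derive (fun u => V3 k1 k2 k3 a2 a5 u (y t)) (x t)) ->
  is_derive vy t (- Derive (fun u => V3 k1 k2 k3 a2 a5 (x t) u) (y t)) ->
  is_derive (fun s => J3 k1 k2 k3 a2 a5 (x s) (y s) (vx s) (vy s)) t 0.
Proof.
  intros Hr Hw Dx Dy Dvx Dvy.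
  rewrite Derive_V3_x in Dvx by assumption.
  rewrite Derive_V3_y in Dvy by assumption.
  pose proof (sum_sqr_pos_of_rad_neq0 _ _ Hr) as Hp.
  pose proof (rad_mul_rad (x t) (y t)) as Hrr.
  unfold J3, rad in *; cbv zeta in *.
  auto_derive.
  all: replace (x t * (x t * 1) + y t * (y t * 1)) with (x t ^ 2 + y t ^ 2) by ring;
       replace (a2 * y t + - (a5 * x t)) with (a2 * y t - a5 * x t) by ring.
  - repeat split; try (eexists; eassumption); try lra;
      repeat apply Rmult_integral_contrapositive_currified; auto; lra.
  - rewrite (is_derive_unique (fun s : R => x s) _ _ Dx),
      (is_derive_unique (fun s : R => y s) _ _ Dy),
      (is_derive_unique (fun s : R => vx s) _ _ Dvx),
      (is_derive_unique (fun s : R => vy s) _ _ Dvy).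
    set (r := sqrt (x t ^ 2 + y t ^ 2)) in *.
    field_simplify; auto.
    unfold Rdiv; apply Rmult_eq_0_compat_r.
    (* Only even powers of r are reducible: split r^(n+2) into (r * r) * r^n. *)
    repeat rewrite (pow_SS_mul r); rewrite Hrr; ring.
Qed.

Theorem mainTheorem6 (k1 k2 k3 a2 a5 : R) :
  (a2, a5) <> (0, 0) ->
  forall (a b : R) (x y vx vy : R -> R),
  (forall t, a < t < b ->
     rad (x t) (y t) <> 0 /\ a2 * y t - a5 * x t <> 0 /\
     is_derive x t (vx t) /\ is_derive y t (vy t) /\
     is_derive vx t (- Derive (fun u => V3 k1 k2 k3 a2 a5 u (y t)) (x t)) /\
     is_derive vy t (- Derive (fun u => V3 k1 k2 k3 a2 a5 (x t) u) (y t))) ->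
  forall t1 t2, a < t1 < b -> a < t2 < b ->
    J3 k1 k2 k3 a2 a5 (x t1) (y t1) (vx t1) (vy t1)
    = J3 k1 k2 k3 a2 a5 (x t2) (y t2) (vx t2) (vy t2).
Proof.
  (* (a2, a5) <> (0, 0) already follows from a2 y - a5 x <> 0 along the solution. *)
  intros _ a b x y vx vy Hsol.
  apply is_derive_0_constant_on_open_interval.
  intros t Ht.
  destruct (Hsol t Ht) as (Hr & Hw & Dx & Dy & Dvx & Dvy).
  now apply is_derive_J3_along_solution.
Qed.
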